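(* Let $\varphi\colon\mathbb{R}\to(-\infty,+\infty]$ be a proper convex lower semi-continuous function with $\varphi(0)<+\infty$. Then at every $p\in\mathbb{R}$ where the right derivatives are defined, $(\varphi_\uparrow^* )'_+(p)=\max\{0,(\varphi^* )'_+(p)\}$.
   Context: $\varphi_\uparrow(x)=\varphi(x)$ for $x\ge0$ and $+\infty$ for $x<0$. $g^*(p)=\sup_{x\in\mathbb{R}}\{xp-g(x)\}$ is the convex conjugate, and $g'_+(x)=\lim_{h\downarrow0}(g(x+h)-g(x))/h$ is the right derivative. *)

From HB Require Import structures.
From mathcomp Require Import all_boot all_order all_algebra.
From mathcomp Require Import all_classical all_reals all_analysis.
Set Implicit Arguments. Unset Strict Implicit. Unset Printing Implicit Defensive.
Import Order.TTheory GRing.Theory Num.Theory.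
Import numFieldNormedType.Exports.
Local Open Scope classical_set_scope.
Local Open Scope ring_scope.
Local Open Scope ereal_scope.

Section defs.
Context {R : realType}.

Definition proper_fun (f : R -> \bar R) : Prop :=
  (forall x, f x != -oo) /\ (exists x, f x != +oo).

Definition convex_efun (f : R -> \bar R) : Prop :=
  forall (x y t : R), (0 < t < 1)%R ->
    f (t * x + (1 - t) * y)%R <= t%:E * f x + (1 - t)%:E * f y.

Definition lsc_efun (f : R -> \bar R) : Prop :=
  forall (x a : R), a%:E < f x -> \forall y \near x, a%:E < f y.

Definition phi_up (f : R -> \bar R) : R -> \bar R :=
  fun x => if (0 <= x)%R then f x else +oo.

Definition conj_fun (g : R -> \bar R) : R -> \bar R :=
  fun p => ereal_sup [set (x * p)%:E - g x | x in [set: R]].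

Definition has_rderiv (g : R -> \bar R) (p : R) (l : \bar R) : Prop :=
  g p \is a fin_num /\
  ((g (p + h)%R - g p) * (h^-1)%:E) @[h --> (0:R)^'+] --> l.

End defs.

From HB Require Import structures.
From mathcomp Require Import all_boot all_order all_algebra.
From mathcomp Require Import all_classical all_reals all_analysis.
From mathcomp Require Import lra ring.

(* Write f := phi^* and g := phi_up^*.  Both are suprema of the affine maps
   q |-> x q - phi x, over all x for f and over x >= 0 for g.  Hence g <= f,
   g is nondecreasing (so b >= 0), and for p <= q we have
   f q <= max (g q) (f p), since the maps with x < 0 are nonincreasing.
   If f p = g p, this forces f = g on [p, +oo), so a = b.  Otherwise some
   x1 < 0 has x1 p - phi x1 > g p >= - phi 0; by convexity phi lies above
   the secant through x1 and 0 on (0, +oo), and that secant's slope exceeds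
   p, so g is constantly - phi 0 on a right neighbourhood of p.  There b = 0,
   and f is bounded by f p, so a <= 0. *)
Import Order.TTheory GRing.Theory Num.Theory.
Local Open Scope classical_set_scope.
Local Open Scope ring_scope.
Local Open Scope ereal_scope.

Section right_derivative.
Context {R : realType}.
Implicit Types (g : R -> \bar R) (p : R) (l : \bar R).

Lemma has_rderiv_ge0 g p l : has_rderiv g p l ->
  (\forall h \near (0:R)^'+, g p <= g (p + h)%R) -> 0 <= l.
Proof.
move=> [gp_fin gl] gpS; apply: (cvge_to_ge gl); near=> h.
have h_gt0 : (0 < h)%R by near: h; exact: nbhs_right_gt.
apply: mule_ge0; last by rewrite lee_fin invr_ge0 ltW.
by rewrite sube_ge0 ?gp_fin//; near: h.
Unshelve. all: by end_near.
Qed.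

Lemma has_rderiv_le0 g p l : has_rderiv g p l ->
  (\forall h \near (0:R)^'+, g (p + h)%R <= g p) -> l <= 0.
Proof.
move=> [gp_fin gl] gpS; apply: (cvge_to_le gl); near=> h.
have h_gt0 : (0 < h)%R by near: h; exact: nbhs_right_gt.
apply: mule_le0_ge0; last by rewrite lee_fin invr_ge0 ltW.
by rewrite sube_le0; near: h.
Unshelve. all: by end_near.
Qed.

Lemma has_rderiv_near_eq g1 g2 p l1 l2 :
  has_rderiv g1 p l1 -> has_rderiv g2 p l2 -> g1 p = g2 p ->
  (\forall h \near (0:R)^'+, g1 (p + h)%R = g2 (p + h)%R) -> l1 = l2.
Proof.
move=> [_ gl1] [_ gl2] gp g12.
suff gl12 : ((g1 (p + h)%R - g1 p) * (h^-1)%:E) @[h --> (0:R)^'+] --> l2.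
  exact: cvg_unique gl1 gl12.
apply: cvg_trans gl2; apply: near_eq_cvg; near=> h.
by rewrite gp; congr ((_ - _) * _); near: h; apply: filterS g12 => ? ->.
Unshelve. all: by end_near.
Qed.

End right_derivative.

Section convex_secant.
Context {R : realType}.

Lemma convex_efun_ge_secant (f : R -> \bar R) (x0 y x a c : R) :
  convex_efun f -> (x0 < y < x)%R -> f x0 = a%:E -> f y = c%:E ->
  (c + (x - y) * ((c - a) / (y - x0)))%:E <= f x.
Proof.
move=> cvx /andP[x0y yx] fx0 fy.
set t := ((x - y) / (x - x0))%R.
have t01 : (0 < t < 1)%R by rewrite divr_gt0 ?ltr_pdivrMr ?mul1r /=; lra.
have yE : (t * x0 + (1 - t) * x)%R = y by rewrite /t; field; lra.
have := cvx x0 x t t01; rewrite yE fx0 fy.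
case: (f x) => [fx| |]; last 2 first.
- by rewrite leey.
- case/andP: t01 => _ t1.
  by rewrite gt0_muleNy ?lte_fin ?subr_gt0// addeNy leeNy_eq.
rewrite -!EFinM -EFinD !lee_fin => cvx_ineq.
have cvx_ineq' : (c * (x - x0) <= (x - y) * a + (y - x0) * fx)%R.
  have -> : ((x - y) * a + (y - x0) * fx =
             (t * a + (1 - t) * fx) * (x - x0))%R by rewrite /t; field; lra.
  by rewrite ler_wpM2r// subr_ge0 ltW// (lt_trans x0y).
rewrite -(@ler_pM2l _ (y - x0)) ?subr_gt0//.
have -> : ((y - x0) * (c + (x - y) * ((c - a) / (y - x0))) =
           c * (x - x0) - (x - y) * a)%R by field; lra.
lra.
Qed.

End convex_secant.

Section conjugate.
Context {R : realType}.
Implicit Types (phi : R -> \bar R) (x p q : R).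

Lemma conj_fun_ubound phi x q : (x * q)%:E - phi x <= conj_fun phi q.
Proof. by apply: ereal_sup_ubound; exists x. Qed.

Lemma ge_conj_fun phi q (y : \bar R) :
  (forall x, (x * q)%:E - phi x <= y) -> conj_fun phi q <= y.
Proof. by move=> ley; apply: ge_ereal_sup => _ [x _ <-]. Qed.

Lemma conj_fun_phi_up_ubound phi x q : (0 <= x)%R ->
  (x * q)%:E - phi x <= conj_fun (phi_up phi) q.
Proof.
by move=> x_ge0; have := conj_fun_ubound (phi_up phi) x q; rewrite /phi_up x_ge0.
Qed.

Lemma ge_conj_fun_phi_up phi q (y : \bar R) :
  (forall x, (0 <= x)%R -> (x * q)%:E - phi x <= y) ->
  conj_fun (phi_up phi) q <= y.
Proof.
move=> ley; apply: ge_conj_fun => x; rewrite /phi_up.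
by case: ifPn => [/ley//|_]; rewrite addeNy leNye.
Qed.

Lemma conj_fun_phi_up_le phi q : conj_fun (phi_up phi) q <= conj_fun phi q.
Proof. by apply: ge_conj_fun_phi_up => x _; exact: conj_fun_ubound. Qed.

Lemma nondecreasing_conj_fun_phi_up phi :
  {homo conj_fun (phi_up phi) : q r / (q <= r)%R >-> q <= r}.
Proof.
move=> q r qr; apply: ge_conj_fun_phi_up => x x_ge0.
apply: le_trans _ (@conj_fun_phi_up_ubound phi x r x_ge0).
by apply: leeB => //; rewrite lee_fin ler_wpM2l.
Qed.

Lemma conj_fun_le_max_phi_up phi {p q} : (p <= q)%R ->
  conj_fun phi q <= maxe (conj_fun (phi_up phi) q) (conj_fun phi p).
Proof.
move=> pq; apply: ge_conj_fun => x; rewrite le_max.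
have [x_ge0|x_lt0] := leP 0%R x; first by rewrite conj_fun_phi_up_ubound.
apply/orP; right; apply: le_trans _ (conj_fun_ubound _ x p).
by apply: leeB => //; rewrite lee_fin ler_wnM2l// ltW.
Qed.

Lemma conj_fun_phi_up_below_slope phi x1 F1 F0 q :
  convex_efun phi -> (x1 < 0)%R -> phi x1 = F1%:E -> phi 0%R = F0%:E ->
  (q <= (F0 - F1) / - x1)%R -> conj_fun (phi_up phi) q = (- F0)%:E.
Proof.
move=> cvx x1_lt0 phix1 phi0 q_le.
have at0 : (0 * q)%:E - phi 0%R = (- F0)%:E by rewrite mul0r phi0 -EFinB sub0r.
apply/le_anti/andP; split; last by rewrite -at0 conj_fun_phi_up_ubound.
apply: ge_conj_fun_phi_up => x; rewrite le_eqVlt => /predU1P[<-|x_gt0].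
  by rewrite at0.
have := @convex_efun_ge_secant _ phi x1 0 x F1 F0 cvx _ phix1 phi0.
rewrite x1_lt0 x_gt0 subr0 sub0r => /(_ isT) secant.
apply: le_trans (leeB (lexx _) secant) _; rewrite -EFinB lee_fin.
have : (x * q <= x * ((F0 - F1) / - x1))%R by rewrite ler_wpM2l// ltW.
lra.
Qed.

Lemma conj_fun_phi_up_flat {phi p} :
  convex_efun phi -> (forall x, phi x != -oo) -> phi 0%R < +oo ->
  conj_fun (phi_up phi) p < conj_fun phi p ->
  exists2 s, (p < s)%R &
    forall q, (q <= s)%R -> conj_fun (phi_up phi) q = conj_fun (phi_up phi) p.
Proof.
move=> cvx phiNoo phi0_lty gp_lt.
have [_ [x1 _ <-] gp_lt_x1] := ereal_sup_gt gp_lt.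
have x1_lt0 : (x1 < 0)%R.
  rewrite ltNge; apply: contraTN gp_lt_x1 => x1_ge0.
  by rewrite -leNgt conj_fun_phi_up_ubound.
case phix1 : (phi x1) => [F1| |] in gp_lt_x1 *; last 2 first.
- by move: gp_lt_x1; rewrite addeNy ltNge leNye.
- by move: (phiNoo x1); rewrite phix1.
case phi0 : (phi 0%R) => [F0| |] in phi0_lty *; last 2 first.
- by rewrite ltxx in phi0_lty.
- by move: (phiNoo 0%R); rewrite phi0.
have flat q : (q <= (F0 - F1) / - x1)%R -> conj_fun (phi_up phi) q = (- F0)%:E.
  exact: conj_fun_phi_up_below_slope cvx x1_lt0 phix1 phi0.
have gp_ge : (- F0)%:E <= conj_fun (phi_up phi) p.
  have := @conj_fun_phi_up_ubound phi 0 p (lexx _).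
  by rewrite mul0r phi0 -EFinB sub0r.
have p_lt_slope : (p < (F0 - F1) / - x1)%R.
  have := le_lt_trans gp_ge gp_lt_x1; rewrite -EFinB lte_fin.
  rewrite ltr_pdivlMr ?oppr_gt0// mulrN [(x1 * p)%R]mulrC; lra.
by exists ((F0 - F1) / - x1)%R => // q qs; rewrite !flat// ltW.
Qed.

End conjugate.

Theorem lemma5 (R : realType) (phi : R -> \bar R) :
  proper_fun phi -> convex_efun phi -> lsc_efun phi -> phi 0%R < +oo ->
  forall (p : R) (a b : \bar R),
    has_rderiv (conj_fun phi) p a ->
    has_rderiv (conj_fun (phi_up phi)) p b ->
    b = maxe 0 a.
Proof.
move=> [phiNoo _] cvx _ phi0_lty p a b fa gb.
have g_nd := @nondecreasing_conj_fun_phi_up R phi.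
have b_ge0 : 0 <= b.
  apply: has_rderiv_ge0 gb _; near=> h; apply: g_nd; rewrite lerDl.
  by apply: ltW; near: h; exact: nbhs_right_gt.
have [fp_le_gp|gp_lt_fp] := leP (conj_fun phi p) (conj_fun (phi_up phi) p).
  have f_eq_g q : (p <= q)%R -> conj_fun phi q = conj_fun (phi_up phi) q.
    move=> pq; apply/le_anti; rewrite conj_fun_phi_up_le andbT.
    apply: le_trans (conj_fun_le_max_phi_up phi pq) _.
    by rewrite ge_max lexx (le_trans fp_le_gp)// g_nd.
  have -> : a = b.
    apply: has_rderiv_near_eq fa gb (f_eq_g _ (lexx _)) _; near=> h.
    by apply: f_eq_g; rewrite lerDl; apply: ltW; near: h; exact: nbhs_right_gt.
  by rewrite max_r.
have [s p_lt_s g_flat] := conj_fun_phi_up_flat cvx phiNoo phi0_lty gp_lt_fp.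
have near_s : \forall h \near (0:R)^'+, (p + h <= s)%R.
  near=> h; rewrite -lerBrDl; near: h.
  by apply: nbhs_right_le; rewrite subr_gt0.
have b_le0 : b <= 0.
  by apply: has_rderiv_le0 gb _; apply: filterS near_s => h /g_flat ->.
have a_le0 : a <= 0.
  apply: has_rderiv_le0 fa _; near=> h.
  have /g_flat g_eq : (p + h <= s)%R by near: h; exact: near_s.
  apply: le_trans (conj_fun_le_max_phi_up phi (_ : p <= p + h)%R) _.
    by rewrite lerDl; apply: ltW; near: h; exact: nbhs_right_gt.
  by rewrite g_eq ge_max lexx (ltW gp_lt_fp).
by rewrite max_l//; apply/le_anti; rewrite b_le0 b_ge0.
Unshelve. all: by end_near.
Qed.
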